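(* Consider the sample version of the stable PC-like algorithm (SPC4LWF), in which each conditional independence query ''$u\perp\!\!\!\perp v\mid S$'' is answered by a fixed (possibly erroneous, e.g. estimated from data by statistical tests) deterministic rule depending only on $(u,v,S)$, with the answer symmetric in $u$ and $v$. Then the skeleton (the undirected graph $H$ obtained at the end of the skeleton recovery phase) is the same for every ordering $\mathrm{order}(V)$ of the variables.
   Context: Let $V$ be a finite set of variables. Skeleton recovery phase of SPC4LWF with an ordering $\mathrm{order}(V)$: let $H$ be the complete undirected graph on $V$. For $i=0,1,\dots,|V|-2$: first, for every vertex $x$, store $a_H(x)$ := the current set of vertices adjacent to $x$ in $H$; then, while possible, select (in an order determined by $\mathrm{order}(V)$) an ordered pair $(u,v)$ with $u\in a_H(v)$, $u,v$ still adjacent in $H$, and $|a_H(u)\setminus\{v\}|\ge i$; if there is $S\subseteq a_H(u)\setminus\{v\}$ with $|S|=i$ for which the query $u\perp\!\!\!\perp v\mid S$ is answered ''independent'', set $S_{uv}=S_{vu}=S$ and remove the edge $u-v$ from $H$. The stored sets $a_H$ are not updated within a level $i$; they are recomputed only at the start of the next level. *)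

From mathcomp Require Import all_boot.
Set Implicit Arguments. Unset Strict Implicit. Unset Printing Implicit Defensive.

(* An undirected graph on V is represented by its symmetric set of ordered
   pairs (u,v) such that u - v is an edge. *)

Section SPC.
Variable V : finType.

Definition complete_graph : {set V * V} := [set p | p.1 != p.2].

Definition adj (E : {set V * V}) (x : V) : {set V} := [set y | (x, y) \in E].

Definition remove_edge (E : {set V * V}) (u v : V) : {set V * V} :=
  E :\ (u, v) :\ (v, u).

(* CI oracle: [ci u v S = true] means "u _||_ v | S" is answered independent *)
Variable ci : V -> V -> {set V} -> bool.

(* processing the selected ordered pair (u,v) at level i, with the stored
   (frozen) adjacency sets a *)
Definition spc_step (i : nat) (a : V -> {set V}) (E : {set V * V})
    (p : V * V) : {set V * V} :=
  let: (u, v) := p in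
  if [&& u \in a v, (u, v) \in E, i <= #|a u :\ v|
       & [exists S : {set V}, [&& S \subset a u :\ v, #|S| == i & ci u v S]]]
  then remove_edge E u v else E.

Definition spc_level (ps : seq (V * V)) (E : {set V * V}) (i : nat)
    : {set V * V} :=
  let a := adj E in foldl (spc_step i a) E ps.

Definition spc_skeleton (ps : seq (V * V)) : {set V * V} :=
  foldl (spc_level ps) complete_graph (iota 0 #|V|.-1).

End SPC.

Definition is_ordering (V : finType) (o : seq V) : Prop := perm_eq o (enum V).

Definition pair_selection_rule (V : finType) (sel : seq V -> seq (V * V)) : Prop :=
  forall o, is_ordering o ->
    perm_eq (sel o) (enum [set p : V * V | p.1 != p.2]).

(** Within one level the adjacency sets are frozen, so whether the pair (u,v)
   would be cut does not depend on the current graph; the only dependence on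
   the graph is the test that u - v is still present, and cutting an absent
   edge changes nothing.  Hence a level removes from the graph exactly the
   union of the edges u - v over the selected pairs passing the frozen test,
   a set that does not depend on the order in which the pairs are selected. *)

From mathcomp Require Import all_boot.
Set Implicit Arguments. Unset Strict Implicit. Unset Printing Implicit Defensive.

Section StableSkeleton.
Variable V : finType.
Variable ci : V -> V -> {set V} -> bool.

Definition undirected (E : {set V * V}) :=
  forall u v, ((u, v) \in E) = ((v, u) \in E).

Definition uedge (u v : V) : {set V * V} := [set (u, v); (v, u)].

Definition cut_test (i : nat) (a : V -> {set V}) (u v : V) :=
  [&& u \in a v, i <= #|a u :\ v|
    & [exists S : {set V}, [&& S \subset a u :\ v, #|S| == i & ci u v S]]].

Definition cut_edges i a (ps : seq (V * V)) : {set V * V} :=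
  \bigcup_(p <- ps | cut_test i a p.1 p.2) uedge p.1 p.2.

Lemma uedge_undirected u v : undirected (uedge u v).
Proof. by move=> x y; rewrite !inE !xpair_eqE orbC andbC [(y == v) && _]andbC. Qed.

Lemma undirected_set0 : undirected set0.
Proof. by move=> x y; rewrite !inE. Qed.

Lemma undirectedU E F : undirected E -> undirected F -> undirected (E :|: F).
Proof. by move=> symE symF x y; rewrite !inE symE symF. Qed.

Lemma undirectedD E F : undirected E -> undirected F -> undirected (E :\: F).
Proof. by move=> symE symF x y; rewrite !inE symE symF. Qed.

Lemma cut_edges_undirected i a ps : undirected (cut_edges i a ps).
Proof.
apply: big_ind => [||p _]; last exact: uedge_undirected.
- exact: undirected_set0.
- exact: undirectedU.
Qed.

Lemma cut_edges_cons i a p ps :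
  cut_edges i a (p :: ps) =
  (if cut_test i a p.1 p.2 then uedge p.1 p.2 else set0) :|: cut_edges i a ps.
Proof. by rewrite /cut_edges big_cons; case: ifP; rewrite ?set0U. Qed.

Lemma cut_edges_perm i a ps1 ps2 :
  perm_eq ps1 ps2 -> cut_edges i a ps1 = cut_edges i a ps2.
Proof. exact: perm_big. Qed.

Lemma remove_edgeE E u v : remove_edge E u v = E :\: uedge u v.
Proof. by rewrite /remove_edge setDDl. Qed.

Lemma setD_uedge_absent E u v :
  undirected E -> (u, v) \notin E -> E :\: uedge u v = E.
Proof.
move=> symE uvNE; apply/setP => p; rewrite !inE.
case: eqP => [->|_]; first by rewrite (negbTE uvNE) andbF.
by case: eqP => [->|_] //; rewrite -symE (negbTE uvNE) andbF.
Qed.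

Lemma spc_stepE i a E u v : undirected E ->
  spc_step ci i a E (u, v) =
  E :\: (if cut_test i a u v then uedge u v else set0).
Proof.
move=> symE; rewrite /spc_step.
have [_|uvNE] := boolP ((u, v) \in E).
  by rewrite /= -/(cut_test i a u v); case: ifP; rewrite ?remove_edgeE ?setD0.
by rewrite /= andbF; case: ifP; rewrite ?setD0 ?setD_uedge_absent.
Qed.

Lemma foldl_spc_step i a E ps : undirected E ->
  foldl (spc_step ci i a) E ps = E :\: cut_edges i a ps.
Proof.
elim: ps E => [|[u v] ps IH] E symE; first by rewrite /cut_edges big_nil setD0.
have symE_step : undirected (spc_step ci i a E (u, v)).
  rewrite spc_stepE //; apply: undirectedD => //.
  by case: ifP => _; [exact: uedge_undirected | exact: undirected_set0].
by apply: etrans (IH _ symE_step) _; rewrite spc_stepE // cut_edges_cons setDDl.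
Qed.

Lemma spc_levelE ps E i : undirected E ->
  spc_level ci ps E i = E :\: cut_edges i (adj E) ps.
Proof. exact: foldl_spc_step. Qed.

Lemma spc_level_undirected ps E i : undirected E -> undirected (spc_level ci ps E i).
Proof.
by move=> symE; rewrite spc_levelE //; apply: undirectedD (cut_edges_undirected _ _ _).
Qed.

Lemma foldl_spc_level_perm ps1 ps2 levels E : perm_eq ps1 ps2 -> undirected E ->
  foldl (spc_level ci ps1) E levels = foldl (spc_level ci ps2) E levels.
Proof.
move=> eq_ps; elim: levels E => [|i levels IH] E symE //.
have eq_level : spc_level ci ps1 E i = spc_level ci ps2 E i.
  by rewrite !spc_levelE // (cut_edges_perm _ _ eq_ps).
by apply: etrans (IH _ (spc_level_undirected ps1 i symE)) _; rewrite eq_level.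
Qed.

Lemma complete_graph_undirected : undirected (complete_graph V).
Proof. by move=> u v; rewrite !inE eq_sym. Qed.

End StableSkeleton.

Theorem theorem2 (V : finType) (ci : V -> V -> {set V} -> bool)
    (ci_sym : forall (u v : V) (S : {set V}), ci u v S = ci v u S)
    (sel : seq V -> seq (V * V)) (Hsel : pair_selection_rule sel)
    (o1 o2 : seq V) (Ho1 : is_ordering o1) (Ho2 : is_ordering o2) :
  spc_skeleton ci (sel o1) = spc_skeleton ci (sel o2).
Proof.
have eq_sel : perm_eq (sel o1) (sel o2).
  by rewrite (perm_trans (Hsel _ Ho1)) // perm_sym Hsel.
by rewrite /spc_skeleton (foldl_spc_level_perm _ _ eq_sel (@complete_graph_undirected V)).
Qed.
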